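(* Let $\mathbf f=(M,\mathscr L,\lambda,\kappa,\theta,\Omega)$ be an additive frame. Then $\mathbf f$ is an additive$^+$ frame (i.e. $|M|\ge\lambda$) if and only if for each $\varepsilon\in(0,\theta)$ there exists $\bar a\in{}^\varepsilon M$ such that $\varphi_{\bar a}(M)$ has cardinality $\ge\lambda$.
   Context: A general frame is a tuple $\mathbf f=(M,\mathscr L,\lambda,\kappa,\theta,\Omega)$ where: (1) $M$ is a $\tau_M$-model; (2) $\mathscr L$ is a class of infinitary formulas in vocabulary $\tau_M$ (built using conjunctions, disjunctions and quantifiers $\exists^\sigma,\forall^\sigma$, $\sigma\in\Omega$, where $\exists^\sigma\bar x'$ asserts existence of $\sigma$ pairwise distinct witnesses), each of the form $\varphi(\bar x)$ with $\lg(\bar x)<\theta$, and $\mathscr L$ is closed under permuting variables, adding dummy variables and finite conjunctions; for such $\varphi$, $\varphi(M)=\{\bar a: M\models\varphi[\bar a]\}$; (3) for every $\varepsilon<\theta$ and $\bar a\in{}^\varepsilon M$ there is $\varphi_{\bar a}(\bar x)\in\mathscr L$ with $\bar a\in\varphi_{\bar a}(M)$ and $\varphi_{\bar a}(M)\subseteq\psi(M)$ whenever $\psi(\bar x)\in\mathscr L$ and $\bar a\in\psi(M)$; (4)(a) if $\varphi_\alpha(\bar x)\in\mathscr L$ for $\alpha<\kappa$ then $\varphi_\alpha(M)\supseteq\varphi_\beta(M)$ for some $\alpha<\beta<\kappa$; (4)(b) if $\varphi_{\alpha,\beta}(\bar x,\bar y)\in\mathscr L$ for $\alpha<\beta<\lambda$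 then there are $\alpha_1<\alpha_2<\alpha_3<\lambda$ with $\varphi_{\alpha_1,\alpha_2}(M)\supseteq\varphi_{\alpha_1,\alpha_3}(M)$ and $\varphi_{\alpha_1,\alpha_2}(M)\supseteq\varphi_{\alpha_2,\alpha_3}(M)$; (5) $\lambda,\kappa$ are regular, $\lambda\ge\kappa\ge\theta\ge|\Omega|+|\tau_M|$, and $\Omega$ is a set of cardinals with $1\in\Omega$, all other members infinite. It is an additive frame if moreover (6) $M$ is an additive $\theta$-model ($+,-,0\in\tau_M$, $(|M|,+,-,0)$ an abelian group, predicates interpreted as subgroups of powers of $M$, function symbols as homomorphisms, $|\tau_M|\le\theta$) and (7) for every $\varphi(\bar x_u)\in\mathscr L$, $\varphi(M)$ is a subgroup of ${}^uM$. An additive frame is additive$^+$ if $|M|\ge\lambda$. *)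

From HB Require Import structures.
From mathcomp Require Import all_boot all_order all_algebra.
From mathcomp Require Import boolp classical_sets cardinality.
Set Implicit Arguments. Unset Strict Implicit. Unset Printing Implicit Defensive.
Import GRing.Theory.
Local Open Scope classical_set_scope.
Local Open Scope card_scope.
Local Open Scope ring_scope.

(* Cardinals, represented as initial ordinals: a type with a strict    *)
(* well-order all of whose proper initial segments have strictly      *)
(* smaller cardinality.                                                *)
Record cardinal := Cardinal {
  ord_carrier :> Type;
  olt : ord_carrier -> ord_carrier -> Prop;
  olt_irr : forall x, ~ olt x x;
  olt_trans : forall x y z, olt x y -> olt y z -> olt x z;
  olt_total : forall x y, olt x y \/ x = y \/ olt y x;
  olt_wf : well_founded olt;
  olt_initial : forall x : ord_carrier,
      ~ ([set: ord_carrier] #<= [set y | olt y x])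
}.

(* the ordinal  eps < theta  viewed as the set of its predecessors *)
Definition seg (c : cardinal) (e : c) := {d : c | olt d e}.

Definition regular (c : cardinal) : Prop :=
  infinite_set [set: (c : Type)] /\
  forall S : set c, ~ ([set: (c : Type)] #<= S) ->
    exists x : c, forall y, S y -> olt y x.

Definition card_ge (c d : cardinal) : Prop := [set: (d : Type)] #<= [set: (c : Type)].

(* Vocabulary tau_M of an additive model: the symbols + , - , 0 are    *)
(* built in; further function symbols and predicate symbols with       *)
(* (arbitrary) arities.                                                *)
Record vocab := Vocab {
  fsym : Type; farity : fsym -> Type;
  psym : Type; parity : psym -> Type
}.

(* Omega: a set of cardinals, given as a family indexed by qind *)
Record quants := Quants { qind : Type; qcard : qind -> Type }.

Section Syntax.
Variables (tau : vocab) (Om : quants).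

Inductive term (V : Type) : Type :=
  | tvar : V -> term V
  | tzero : term V
  | tadd : term V -> term V -> term V
  | topp : term V -> term V
  | tapp : forall f : fsym tau, (farity f -> term V) -> term V.

Local Unset Implicit Arguments.
Inductive iform : Type -> Type :=
  | feq : forall V, term V -> term V -> iform V
  | fpred : forall V (p : psym tau), (parity p -> term V) -> iform V
  | fconj : forall V (I : Type), (I -> iform V) -> iform V
  | fdisj : forall V (I : Type), (I -> iform V) -> iform V
  (* exists^sigma xbar' / forall^sigma xbar', sigma in Omega,  xbar' indexed by W *)
  | fex : forall V (s : qind Om) (W : Type), iform (V + W) -> iform V
  | fall : forall V (s : qind Om) (W : Type), iform (V + W) -> iform V.

Local Set Implicit Arguments.
Definition join (M V W : Type) (v : V -> M) (w : W -> M) : V + W -> M :=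
  fun x => match x with inl a => v a | inr b => w b end.

Variables (M : zmodType)
  (fI : forall f : fsym tau, (farity f -> M) -> M)
  (pI : forall p : psym tau, set (parity p -> M)).

Fixpoint teval (V : Type) (v : V -> M) (t : term V) : M :=
  match t with
  | tvar x => v x
  | tzero => 0
  | tadd t1 t2 => teval v t1 + teval v t2
  | topp t1 => - teval v t1
  | tapp f ts => fI (fun i => teval v (ts i))
  end.

(* phi(M) = set of assignments satisfying phi.                          *)
(* exists^sigma : there are sigma pairwise distinct witnesses;          *)
(* forall^sigma : its dual, fewer than sigma tuples fail.               *)
Fixpoint sat (V : Type) (phi : iform V) : set (V -> M) :=
  match phi in iform V return set (V -> M) with
  | feq _ t1 t2 => [set v | teval v t1 = teval v t2]
  | fpred _ p ts => [set v | pI (fun i => teval v (ts i))]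
  | fconj _ J fs => [set v | forall i, sat (fs i) v]
  | fdisj _ J fs => [set v | exists i, sat (fs i) v]
  | fex _ s W psi =>
      [set v | [set: qcard s] #<= [set w : W -> M | sat psi (join v w)]]
  | fall _ s W psi =>
      [set v | ~ ([set: qcard s] #<= [set w : W -> M | ~ sat psi (join v w)])]
  end.

Fixpoint trename (V U : Type) (r : V -> U) (t : term V) : term U :=
  match t with
  | tvar x => tvar (r x)
  | tzero => tzero U
  | tadd t1 t2 => tadd (trename r t1) (trename r t2)
  | topp t1 => topp (trename r t1)
  | tapp f ts => tapp (fun i => trename r (ts i))
  end.

Definition sum_map (V U W : Type) (r : V -> U) (x : V + W) : U + W :=
  match x with inl a => inl (r a) | inr b => inr b end.

Fixpoint frename (V : Type) (phi : iform V) : forall U : Type, (V -> U) -> iform U :=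
  match phi in iform V return forall U : Type, (V -> U) -> iform U with
  | feq _ t1 t2 => fun U r => feq _ (trename r t1) (trename r t2)
  | fpred _ p ts => fun U r => fpred _ p (fun i => trename r (ts i))
  | fconj _ J fs => fun U r => fconj _ J (fun i => frename (fs i) r)
  | fdisj _ J fs => fun U r => fdisj _ J (fun i => frename (fs i) r)
  | fex _ s W psi => fun U r => fex _ s _ (frename psi (@sum_map _ _ W r))
  | fall _ s W psi => fun U r => fall _ s _ (frename psi (@sum_map _ _ W r))
  end.

Definition fand (V : Type) (phi psi : iform V) : iform V :=
  fconj _ bool (fun b : bool => if b then phi else psi).

End Syntax.

Record frame := Frame {
  fr_tau : vocab;
  fr_M : zmodType;
  fr_fI : forall f : fsym fr_tau, (farity f -> fr_M) -> fr_M;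
  fr_pI : forall p : psym fr_tau, set (parity p -> fr_M);
  fr_lam : cardinal;
  fr_kap : cardinal;
  fr_the : cardinal;
  fr_Om : quants;
  (* L: for each eps < theta, the formulas of L whose free variables    *)
  (* are x_delta, delta < eps                                           *)
  fr_L : forall e : fr_the, set (iform fr_tau fr_Om (seg e))
}.

Arguments fr_fI : clear implicits.
Arguments fr_pI : clear implicits.
Arguments fr_L : clear implicits.

Section FrameDefs.
Variable fr : frame.
Local Notation M := (fr_M fr).
Local Notation L := (fr_L fr _).
Local Notation th := (fr_the fr).
Definition fsat (V : Type) (phi : iform (fr_tau fr) (fr_Om fr) V) : set (V -> M) :=
  sat (fr_fI fr) (fr_pI fr) phi.

(* phi is a valid choice of phi_abar (clause (3)) *)
Definition is_phi_a (e : th) (a : seg e -> M)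
    (phi : iform (fr_tau fr) (fr_Om fr) (seg e)) : Prop :=
  L phi /\ fsat phi a /\
  forall psi, L psi -> fsat psi a -> fsat phi `<=` fsat psi.

(* |tau_M|: the extra symbols + , - , 0 together with fsym and psym *)
Definition tau_card_type : Type := (fsym (fr_tau fr) + psym (fr_tau fr) + 'I_3)%type.

Definition general_frame : Prop :=
  (* (2) closure: renaming by injections (= permuting variables and     *)
  (*     adding dummy variables) and finite conjunctions                *)
  (forall (e e' : th) (r : seg e -> seg e') phi,
      injective r -> L phi -> L (frename phi r)) /\
  (forall (e : th) (phi psi : iform _ _ (seg e)), L phi -> L psi -> L (fand phi psi)) /\
  (* (3) *)
  (forall (e : th) (a : seg e -> M), exists phi, is_phi_a a phi) /\
  (forall (e : th) (phi : fr_kap fr -> iform _ _ (seg e)),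
      (forall al, L (phi al)) ->
      exists al be, olt al be /\ fsat (phi be) `<=` fsat (phi al)) /\
  (* (4)(b) *)
  (forall (e : th) (phi : fr_lam fr -> fr_lam fr -> iform _ _ (seg e)),
      (forall al be, olt al be -> L (phi al be)) ->
      exists a1 a2 a3, olt a1 a2 /\ olt a2 a3 /\
        fsat (phi a1 a3) `<=` fsat (phi a1 a2) /\
        fsat (phi a2 a3) `<=` fsat (phi a1 a2)) /\
  regular (fr_lam fr) /\ regular (fr_kap fr) /\
  card_ge (fr_lam fr) (fr_kap fr) /\ card_ge (fr_kap fr) th /\
  [set: (qind (fr_Om fr) + tau_card_type)%type] #<= [set: (th : Type)] /\
  (* Omega is a set of cardinals (distinct indices = distinct cardinals), *)
  (* 1 in Omega, all other members infinite                               *)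
  (forall i j : qind (fr_Om fr), [set: qcard i] #= [set: qcard j] -> i = j) /\
  (exists i : qind (fr_Om fr), [set: qcard i] #= [set: unit]) /\
  (forall i : qind (fr_Om fr),
      [set: qcard i] #= [set: unit] \/ infinite_set [set: qcard i]).

Definition additive_frame : Prop :=
  general_frame /\
  (forall (f : fsym (fr_tau fr)) (x y : farity f -> M),
      fr_fI fr f (fun i => x i - y i) = fr_fI fr f x - fr_fI fr f y) /\
  (forall p : psym (fr_tau fr),
      fr_pI fr p (fun _ => 0) /\
      forall x y, fr_pI fr p x -> fr_pI fr p y -> fr_pI fr p (fun i => x i - y i)) /\
  [set: tau_card_type] #<= [set: (th : Type)] /\
  (forall (e : th) (phi : iform _ _ (seg e)), L phi ->
      fsat phi (fun _ => 0) /\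
      forall x y, fsat phi x -> fsat phi y -> fsat phi (fun i => x i - y i)).

Definition additive_plus_frame : Prop :=
  additive_frame /\ [set: (fr_lam fr : Type)] #<= [set: (M : Type)].

End FrameDefs.

From HB Require Import structures.
From mathcomp Require Import all_boot all_order all_algebra.
From mathcomp Require Import boolp classical_sets cardinality.
Local Open Scope classical_set_scope.
Local Open Scope card_scope.

(* If |M| >= lambda but every phi_abar(M), for abar of length eps > 0, has size
   < lambda, write c m for the constant eps-tuple with value m and choose by
   transfinite recursion m_beta (beta < lambda) such that
   c (m_gamma - m_beta) is never in phi_{c (m_beta - m_alpha)}(M) for
   alpha < beta < gamma: the forbidden values at stage beta form a union of
   fewer than lambda sets of size < lambda, so by regularity they do not
   exhaust M.  Clause (4)(b) applied to phi_{c (m_beta - m_alpha)} then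
   yields alpha < beta < gamma contradicting this choice.  Conversely, for
   eps = 1 the set phi_abar(M) lives in ^1 M, which has the size of M. *)

Lemma card_le_inj {T U} {A : set T} {B : set U} (f : T -> U) :
  (forall x, A x -> B (f x)) -> {in A &, injective f} -> A #<= B.
Proof.
move=> AB /inj_card_eq; rewrite card_eq_le => /andP[_ Af].
by apply: card_le_trans Af (subset_card_le _) => _ [x Ax <-]; apply: AB.
Qed.

Lemma card_le_setT_inj {T U} {B : set U} : [set: T] #<= B ->
  exists2 f : T -> U, (forall x, B (f x)) & injective f.
Proof.
move/card_leP/injfunPex => [g gB ginj].
pose in_setT x : [set: T] := SigSub (mem_set (I : setT x)).
exists (fun x => val (g (in_setT x))) => [x|x y /val_inj].
  exact/set_mem/valP.
by move/ginj => /(_ (mem_set I) (mem_set I)) /(congr1 val).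
Qed.

Lemma card_fun_le_of_subsingleton {V M} (v0 : V) :
  (forall v, v = v0) -> [set: V -> M] #<= [set: M].
Proof.
move=> V1; apply: (card_le_inj (fun a => a v0)) => // a b _ _ abv0.
by apply: functional_extensionality_dep => v; rewrite (V1 v).
Qed.

Lemma well_founded_min {X} {R : X -> X -> Prop} (P : X -> Prop) (x : X) :
  well_founded R -> P x -> exists m, P m /\ forall y, R y m -> ~ P y.
Proof.
move=> /well_founded_ind wfR; elim/wfR: x => x IH Px.
have [[y [yx Py]]|nPx] := pselect (exists y, R y x /\ P y).
  exact: IH yx Py.
by exists x; split=> // y yx Py; apply: nPx; exists y.
Qed.

Lemma well_founded_dependent_choice {X A} {R : X -> X -> Prop}
    (P : forall x, (forall y, R y x -> A) -> A -> Prop) :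
  well_founded R -> (forall x r, exists a, P x r a) ->
  exists s : X -> A, forall x, P x (fun y _ => s y) (s x).
Proof.
move=> wfR /(_ _ _)/cid Pex.
pose s := Fix wfR (fun _ => A) (fun x r => sval (Pex x r)).
exists s => x; rewrite /s Fix_eq; first exact: svalP.
move=> y f g fg; suff -> : f = g by [].
by do 2 apply: functional_extensionality_dep => ?.
Qed.

Definition small (c : cardinal) {T} (A : set T) := ~ ([set: (c : Type)] #<= A).

Lemma regular_bigcup_small {c : cardinal} {T} {I : set c} {F : c -> set T} :
  regular c -> small c I -> (forall i, I i -> small c (F i)) ->
  small c (\bigcup_(i in I) F i).
Proof.
move=> [_ c_bounded] I_small F_small /card_le_setT_inj[g gF ginj].
have [b bP] :
    {b : c -> c & forall i, I i -> forall y, F i (g y) -> olt y (b i)}.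
  apply: (@choice _ _ (fun i x => I i -> forall y, F i (g y) -> olt y x)) => i.
  have [Ii|nIi] := pselect (I i); last by exists i => /nIi.
  have [x xP] := c_bounded (g @^-1` F i) (fun gFi => F_small i Ii
    (card_le_trans gFi (card_le_inj g (fun _ => id) (in2W ginj)))).
  by exists x.
have [z zP] := c_bounded (b @` I)
  (fun bI => I_small (card_le_trans bI (card_image_le _ _))).
have [i Ii Fi] := gF z.
exact: olt_irr (olt_trans (bP i Ii z Fi) (zP _ (imageP _ Ii))).
Qed.

Lemma regular_avoiding_sequence {c : cardinal} {T} {bad : T -> T -> set T} :
  regular c -> [set: (c : Type)] #<= [set: T] ->
  (forall x y, small c (bad x y)) ->
  exists s : c -> T, forall a1 a2 a3,
    olt a1 a2 -> olt a2 a3 -> ~ bad (s a1) (s a2) (s a3).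
Proof.
move=> c_reg cT bad_small.
pose P (be : c) (r : forall al, olt al be -> T) t :=
  forall a1 a2 (h12 : olt a1 a2) (h2 : olt a2 be),
    ~ bad (r a1 (olt_trans h12 h2)) (r a2 h2) t.
have [s sP] : exists s : c -> T, forall be, P be (fun al _ => s al) (s be).
  apply: (well_founded_dependent_choice P (@olt_wf c)) => be r.
  have [t0 _ _] := card_le_setT_inj cT.
  pose r' al := if pselect (olt al be) is left h then r al h else t0 be.
  have r'E al h : r' al = r al h.
    by rewrite /r'; case: pselect => // h'; rewrite (Prop_irrelevance h h').
  pose bad_prefix := \bigcup_(a2 in [set al | olt al be])
    \bigcup_(a1 in [set al | olt al a2]) bad (r' a1) (r' a2).
  have bad_prefix_small : small c bad_prefix.
    apply: (regular_bigcup_small c_reg (@olt_initial _ be)) => a2 _.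
    exact: (regular_bigcup_small c_reg (@olt_initial _ a2)).
  have [t nbad] : exists t, ~ bad_prefix t.
    apply/existsNP => all_bad; apply: bad_prefix_small.
    exact: card_le_trans cT (subset_card_le (fun t _ => all_bad t)).
  exists t => a1 a2 h12 h2 tbad; apply: nbad; exists a2 => //; exists a1 => //.
  by rewrite (r'E a1 (olt_trans h12 h2)) (r'E a2 h2).
by exists s => a1 a2 a3 h12 h23; apply: sP.
Qed.

Lemma cardinal_seg_singleton {c : cardinal} (x y : c) : x <> y ->
  exists e d0 : c, olt d0 e /\ forall d, olt d e -> d = d0.
Proof.
move=> xy.
have [d0 [_ d0_min]] := well_founded_min (fun _ => True) x (@olt_wf c) I.
have [z d0z] : exists z, olt d0 z.
  have [z zd0] : exists z, z <> d0.
    have [xd0|] := pselect (x = d0); last by exists x.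
    by exists y => yd0; apply: xy; rewrite xd0 yd0.
  by exists z; case: (olt_total d0 z) => [|[/esym|/d0_min]] //.
have [e [d0e e_min]] := well_founded_min (olt d0) z (@olt_wf c) d0z.
exists e, d0; split=> // d de.
by case: (olt_total d d0) => [/d0_min|[|/e_min]] //; apply.
Qed.

Lemma general_frame_seg_singleton {fr : frame} : general_frame fr ->
  exists e d0 : fr_the fr, olt d0 e /\ forall d, olt d e -> d = d0.
Proof.
move=> [_ [_ [_ [_ [_ [_ [_ [_ [_ [tau_the _]]]]]]]]]].
have [f _ f_inj] := card_le_setT_inj tau_the.
apply: (cardinal_seg_singleton (f (inr (inr ord0))) (f (inr (inr ord_max)))).
by move/f_inj.
Qed.

Lemma general_frame_large_phi_a {fr : frame} : general_frame fr ->
  [set: (fr_lam fr : Type)] #<= [set: (fr_M fr : Type)] ->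
  forall e : fr_the fr, (exists d, olt d e) ->
  exists (a : seg e -> fr_M fr) phi,
    is_phi_a a phi /\ [set: (fr_lam fr : Type)] #<= fsat phi.
Proof.
move=> [_ [_ [phi_a [_ [four_b [lam_reg _]]]]]] lam_M e [d0 d0e].
apply/not_existsP => phi_a_small.
have [Phi PhiP] := choice (phi_a e).
pose c (m : fr_M fr) (_ : seg e) := m.
have c_inj : injective c by move=> x y /(congr1 (fun a => a (exist _ d0 d0e))).
pose bad x y := [set t | fsat (Phi (c (y - x)%R)) (c (t - y)%R)].
have bad_small x y : small (fr_lam fr) (bad x y).
  move=> lam_bad; apply: (phi_a_small (c (y - x)%R)).
  exists (Phi (c (y - x)%R)); split=> //.
  apply: card_le_trans lam_bad (card_le_inj (fun t => c (t - y)%R) _ _) => //.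
  by move=> t u _ _ /c_inj/GRing.addIr.
have [s s_avoids] := regular_avoiding_sequence lam_reg lam_M bad_small.
have [a1 [a2 [a3 [a12 [a23 [_ sub]]]]]] :=
  four_b e (fun al be => Phi (c (s be - s al)%R)) (fun _ _ _ => (PhiP _).1).
by apply: (s_avoids a1 a2 a3 a12 a23); apply: sub; apply: (PhiP _).2.1.
Qed.

Theorem lemma3p3 (fr : frame) :
  additive_frame fr ->
  (additive_plus_frame fr <->
   forall e : fr_the fr, (exists d : fr_the fr, olt d e) ->
     exists (a : seg e -> fr_M fr) (phi : iform (fr_tau fr) (fr_Om fr) (seg e)),
       is_phi_a a phi /\ [set: (fr_lam fr : Type)] #<= fsat phi).
Proof.
move=> fr_add; split=> [[_ lam_M]|large_phi_a].
  exact: general_frame_large_phi_a fr_add.1 lam_M.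
split=> //.
have [e [d0 [d0e seg_e1]]] := general_frame_seg_singleton fr_add.1.
have [a [phi [_ lam_phi]]] := large_phi_a e (ex_intro _ d0 d0e).
apply: card_le_trans lam_phi (card_le_trans (card_leT _) _).
apply: (card_fun_le_of_subsingleton (exist _ d0 d0e)) => -[d de].
have d_d0 := seg_e1 d de; subst d.
by rewrite (Prop_irrelevance de d0e).
Qed.
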